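(* Let $n\ge3$ and let $I\subseteq(0,+\infty)$ be a bounded interval. Then for every $V\in H^1(I)$, $$\sup_{s\in I}s^{\frac n2-1}|V(s)|\le C\Big[\Big(\int_I s^{n-1}|V'(s)|^2ds\Big)^{1/2}+|I|^{-1}\Big(\int_I s^{n-1}|V(s)|^2ds\Big)^{1/2}\Big],$$ with a constant $C$ independent of $I$ and $V$.
   Context: $|I|$ denotes the length of $I$. *)

From HB Require Import structures.
From mathcomp Require Import all_boot all_order all_algebra.
From mathcomp Require Import all_classical all_reals all_analysis.
Set Implicit Arguments. Unset Strict Implicit. Unset Printing Implicit Defensive.
Import Order.TTheory GRing.Theory Num.Theory.
Import numFieldNormedType.Exports.
Local Open Scope classical_set_scope.
Local Open Scope ring_scope.

(* H1_on D V g : V belongs to the Sobolev space H^1(D) on the (1-d) interval D,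
   V being its (absolutely) continuous representative and g its weak derivative V':
   V, g are in L^2(D) and V y - V x = \int_x^y g for x <= y in D. *)
Definition H1_on (R : realType) (D : set R) (V g : R -> R) : Prop :=
  [/\ measurable_fun D V,
      (lebesgue_measure).-integrable D (fun s => (V s ^+ 2)%:E),
      measurable_fun D g,
      (lebesgue_measure).-integrable D (fun s => (g s ^+ 2)%:E) &
      forall x y, D x -> D y -> x <= y ->
        V y - V x = \int[lebesgue_measure]_(t in `[x, y]) g t].

From HB Require Import structures.
From mathcomp Require Import all_boot all_order all_algebra.
From mathcomp Require Import all_classical all_reals all_analysis.
From mathcomp Require Import measurable_realfun ring lra zify.
Set Implicit Arguments. Unset Strict Implicit. Unset Printing Implicit Defensive.
Import Order.TTheory GRing.Theory Num.Theory.
Import numFieldNormedType.Exports.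
Local Open Scope classical_set_scope.
Local Open Scope ring_scope.

(* Write the weight s^(n-1) as s^(k+2) with k = n - 3.  For 0 < m < M, the pointwise
   AM-GM inequality |g| <= (e/2) x^(k+2) g^2 + x^-(k+2) / (2e) together with
   \int_m^M x^-(k+2) <= m^-k (1/m - 1/M), optimized in e, gives the increment bound
   m^(k+1) (V M - V m)^2 <= \int_I s^(k+2) V'^2 (this replaces Cauchy-Schwarz).
   Averaging s^(k+2) V^2 over [(a+b)/2, (a+3b)/4] produces a point t with
   |I|^2 t^(k+1) V(t)^2 <= 8 \int_I s^(k+2) V^2; as I lies in (0, +oo), every s in I
   satisfies s <= 2t, and V s = V t + (V s - V t) yields the estimate with C = 2^(n-1). *)

Section amgm.
Variable R : realFieldType.

Lemma normr_le_amgm (e w y : R) : 0 < e -> 0 < w ->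
  `|y| <= e / 2 * (w * y ^+ 2) + (2 * e * w)^-1.
Proof.
move=> e0 w0; rewrite -subr_ge0 -[y ^+ 2](real_normK (num_real y)).
have -> : e / 2 * (w * `|y| ^+ 2) + (2 * e * w)^-1 - `|y| =
          (e * w * `|y| - 1) ^+ 2 / (2 * e * w) by field; rewrite !gt_eqF.
by rewrite divr_ge0 ?sqr_ge0 // ltW // !mulr_gt0.
Qed.

Lemma normr_le_weighted_amgm (k : nat) (e m x y : R) : 0 < e -> 0 < m -> m <= x ->
  `|y| <= e / 2 * (x ^+ k.+2 * y ^+ 2) + (2 * e)^-1 * (m ^+ k)^-1 * x ^- 2.
Proof.
move=> e0 m0 mx; have x0 : 0 < x := lt_le_trans m0 mx.
have xk : 0 < x ^+ k.+2 := exprn_gt0 _ x0.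
have e2 : 0 < 2 * e by rewrite mulr_gt0.
apply: (le_trans (normr_le_amgm y e0 xk)).
rewrite lerD2l -!invfM lef_pV2 ?posrE ?(mulr_gt0 e2 xk) ?mulr_gt0 ?exprn_gt0 //.
rewrite -mulrA ler_pM2l // -(addn2 k) exprD ler_pM2r ?exprn_gt0 //.
by rewrite lerXn2r // nnegrE ltW.
Qed.

(* Optimizing the choice [e := K / D] in the hypothesis. *)
Lemma sqr_le_of_amgm (D A K : R) : 0 <= D -> 0 <= A -> 0 < K ->
  (forall e, 0 < e -> D <= e / 2 * A + (2 * e)^-1 * K) -> D ^+ 2 <= A * K.
Proof.
move=> D0 A0 K0 hD; have [->|Dn0] := eqVneq D 0; first by rewrite expr0n /= mulr_ge0 // ltW.
have Dp : 0 < D by rewrite lt_def Dn0.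
have := hD (K / D) (divr_gt0 K0 Dp).
have -> : K / D / 2 * A + (2 * (K / D))^-1 * K = (K * A / D + D) / 2.
  by field; rewrite Dn0 gt_eqF.
have : K * A / D * D = A * K by field.
by move: (K * A / D) => q; nra.
Qed.

End amgm.

Section sqrt.
Variable R : rcfType.

Lemma sqrtr_mul_norm_le (P c Q y : R) : 0 <= P -> 0 <= c -> 0 <= Q ->
  P * y ^+ 2 <= c ^+ 2 * Q -> Num.sqrt P * `|y| <= c * Num.sqrt Q.
Proof.
move=> P0 c0 Q0 h.
rewrite -sqrtr_sqr -[c](ger0_norm c0) -sqrtr_sqr -!sqrtrM ?sqr_ge0 //.
by rewrite ler_sqrt // mulr_ge0 ?sqr_ge0.
Qed.

Lemma sqrtrD_le (x y : R) : 0 <= x -> 0 <= y ->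
  Num.sqrt (x + y) <= Num.sqrt x + Num.sqrt y.
Proof.
move=> x0 y0; rewrite -[X in _ <= X]ger0_norm ?addr_ge0 ?sqrtr_ge0 //.
rewrite -sqrtr_sqr ler_sqrt ?sqr_ge0 // sqrrD !sqr_sqrtr //.
have := mulr_ge0 (sqrtr_ge0 x) (sqrtr_ge0 y); nra.
Qed.

Lemma ler_addsqrt_gt0P (x u c B : R) : 0 <= c -> 0 <= B ->
  (forall d, 0 < d -> x <= u + c * Num.sqrt (B + d)) -> x <= u + c * Num.sqrt B.
Proof.
move=> c0 B0 hx; apply/ler_addgt0Pr => e e0.
have [c_eq0 | cn0] := eqVneq c 0.
  move: (hx 1 ltr01); rewrite c_eq0 !mul0r !addr0 => hx1.
  by rewrite (le_trans hx1) // lerDl ltW.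
have cp : 0 < c by rewrite lt_def cn0.
apply: (le_trans (hx _ (exprn_gt0 2 (divr_gt0 e0 cp)))).
have -> : u + c * Num.sqrt B + e = u + c * (Num.sqrt B + e / c).
  by rewrite mulrDr mulrCA divff // mulr1 addrA.
rewrite lerD2l ler_pM2l // (le_trans (sqrtrD_le _ _)) ?sqr_ge0 //.
by rewrite sqrtr_sqr ger0_norm // divr_ge0 // ltW.
Qed.

End sqrt.

Lemma exprn_le_double (R : realDomainType) (j : nat) (s t : R) :
  0 <= s -> s <= 2 * t -> s ^+ j <= 2 ^+ j * t ^+ j.
Proof.
move=> s0 st; rewrite -exprMn lerXn2r ?nnegrE //; exact: le_trans st.
Qed.

Section intervals.
Variable R : realFieldType.

Lemma subset_itvcc (i : interval R) (m M : R) :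
  m \in i -> M \in i -> `[m, M] `<=` [set` i].
Proof.
case: i => l u; rewrite !itv_boundlr => /andP[lm _] /andP[_ Mu] x /=.
by apply: subitvP; rewrite subitvE lm Mu.
Qed.

Lemma itv_le_right (ba bb : bool) (a b x : R) :
  x \in Interval (BSide ba a) (BSide bb b) -> x <= b.
Proof. by rewrite in_itv /= => /andP[_ /lteifW]. Qed.

Lemma in_itv_oo (ba bb : bool) (a b x : R) :
  a < x -> x < b -> x \in Interval (BSide ba a) (BSide bb b).
Proof. by move=> ax xb; rewrite in_itv /= !lteifS. Qed.

Lemma itv_left_ge0 (ba bb : bool) (a b : R) : a < b ->
  [set` Interval (BSide ba a) (BSide bb b)] `<=` `]0, +oo[ -> 0 <= a.
Proof.
move=> ab pos; rewrite leNgt; apply/negP => a_lt0.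
have [x [ax xb x_lt0]] : exists x, [/\ a < x, x < b & x < 0].
  by case: (ltP (a / 2) b) => h; [exists (a / 2) | exists ((a + b) / 2)]; split; lra.
by move/(_ x (in_itv_oo ba bb ax xb)): pos; rewrite /= in_itv /= andbT; lra.
Qed.

End intervals.

Section integrals.
Variable R : realType.
Local Notation mu := (@lebesgue_measure R).

Lemma is_derive_Ninv (x : R) : x != 0 -> is_derive x 1 (fun y => - y^-1) (x ^- 2).
Proof.
move=> x0; have := is_deriveN (is_deriveV x0 (is_derive_id x 1)).
by rewrite /= scaler1 opprK.
Qed.

Lemma within_continuous_inv_sqr (m M : R) : 0 < m ->
  {within `[m, M], continuous (fun y : R => y ^- 2)}.
Proof.
move=> m0; apply/continuous_in_subspaceT => x /set_mem /=.
rewrite in_itv /= => /andP[mx _]; have x0 : x != 0 by rewrite gt_eqF // (lt_le_trans m0).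
by apply: (@continuousV _ _ (fun y : R => y ^+ 2)); [rewrite expf_neq0 | exact: exprn_continuous].
Qed.

Lemma integral_itv_inv_sqr (m M : R) : 0 < m -> m < M ->
  (\int[mu]_(x in `[m, M]) (x ^- 2)%:E = (m^-1 - M^-1)%:E)%E.
Proof.
move=> m0 mM.
have x_neq0 x : m <= x -> x != 0 by move=> mx; rewrite gt_eqF // (lt_le_trans m0 mx).
have cont_Ninv x : m <= x -> {for x, continuous (fun y : R => - y^-1)}.
  by move=> /x_neq0 x0; apply: continuousN; exact: inv_continuous.
rewrite (@continuous_FTC2 _ _ (fun y => - y^-1)) //.
- by rewrite -EFinD opprK addrC.
- exact: within_continuous_inv_sqr.
- split.
  + move=> x; rewrite in_itv /= => /andP[mx _].
    have dx := is_derive_Ninv (x_neq0 x (ltW mx)); exact: ex_derive.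
  + exact/cvg_at_right_filter/cont_Ninv.
  + exact/cvg_at_left_filter/cont_Ninv/ltW.
- move=> x; rewrite in_itv /= => /andP[mx _].
  by rewrite derive1E; apply: derive_val; exact: is_derive_Ninv (x_neq0 x (ltW mx)).
Qed.

Lemma measurable_weighted_sqr (k : nat) (D : set R) (g : R -> R) :
  measurable_fun D g -> measurable_fun D (fun x => x ^+ k.+2 * g x ^+ 2).
Proof.
by move=> mg; apply: measurable_funM; [exact: exprn_measurable | exact: measurable_funX].
Qed.

Lemma integral_normr_le_weighted (k : nat) (g : R -> R) (m M e : R) :
  0 < m -> m < M -> 0 < e -> measurable_fun `[m, M] g ->
  (\int[mu]_(x in `[m, M]) `|g x|%:E <=
   (e / 2)%:E * \int[mu]_(x in `[m, M]) (x ^+ k.+2 * g x ^+ 2)%:E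
   + ((2 * e)^-1 * (m ^+ k)^-1 * (m^-1 - M^-1))%:E)%E.
Proof.
move=> m0 mM e0 mg.
have mJ : measurable (`[m, M] : set R) := measurable_itv _.
have J_ge0 x : `[m, M]%classic x -> 0 <= x.
  by rewrite /= in_itv /= => /andP[mx _]; rewrite (le_trans (ltW m0)).
pose c := (2 * e)^-1 * (m ^+ k)^-1.
have c0 : 0 <= c by rewrite !mulr_ge0 // invr_ge0 ?exprn_ge0 ?mulr_ge0 // ltW.
have e20 : 0 <= e / 2 by rewrite divr_ge0 // ltW.
have mw := measurable_weighted_sqr k mg.
have minv : measurable_fun `[m, M] (fun x : R => x ^- 2).
  by apply: subspace_continuous_measurable_fun => //; exact: within_continuous_inv_sqr.
have w_ge0 x : `[m, M]%classic x -> (0 <= (x ^+ k.+2 * g x ^+ 2)%:E)%E.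
  by move=> /J_ge0 x0; rewrite lee_fin mulr_ge0 ?sqr_ge0 ?exprn_ge0.
have inv_ge0 x : `[m, M]%classic x -> (0 <= (x ^- 2)%:E)%E.
  by move=> /J_ge0 x0; rewrite lee_fin invr_ge0 exprn_ge0.
have f1_ge0 x : `[m, M]%classic x -> (0 <= (e / 2)%:E * (x ^+ k.+2 * g x ^+ 2)%:E)%E.
  by move=> /w_ge0; apply: mule_ge0.
have f2_ge0 x : `[m, M]%classic x -> (0 <= c%:E * (x ^- 2)%:E)%E.
  by move=> /inv_ge0; apply: mule_ge0.
have mf1 : measurable_fun `[m, M] (fun x => (e / 2)%:E * (x ^+ k.+2 * g x ^+ 2)%:E)%E.
  by apply: emeasurable_funM => //; exact/measurable_EFinP.
have mf2 : measurable_fun `[m, M] (fun x => c%:E * (x ^- 2)%:E)%E.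
  by apply: emeasurable_funM => //; exact/measurable_EFinP.
apply: (@le_trans _ _ (\int[mu]_(x in `[m, M])
    ((e / 2)%:E * (x ^+ k.+2 * g x ^+ 2)%:E + c%:E * (x ^- 2)%:E))%E).
  apply: ge0_le_integral => //.
  - by apply/measurable_EFinP; exact: measurableT_comp mg.
  - exact: emeasurable_funD.
  - move=> x Jx; rewrite -!EFinM -EFinD lee_fin /c.
    by apply: normr_le_weighted_amgm => //; move: Jx; rewrite /= in_itv /= => /andP[].
rewrite ge0_integralD // ge0_integralZl_EFin //; last exact/measurable_EFinP.
rewrite ge0_integralZl_EFin //; last exact/measurable_EFinP.
by rewrite integral_itv_inv_sqr // -EFinM.
Qed.

Lemma sqr_Rintegral_le_weighted (k : nat) (g : R -> R) (m M A : R) :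
  0 < m -> m < M -> measurable_fun `[m, M] g ->
  (\int[mu]_(x in `[m, M]) (x ^+ k.+2 * g x ^+ 2)%:E <= A%:E)%E ->
  m ^+ k.+1 * (\int[mu]_(x in `[m, M]) g x) ^+ 2 <= A.
Proof.
move=> m0 mM mg hA; have M0 : 0 < M := lt_trans m0 mM.
have A0 : 0 <= A.
  rewrite -lee_fin (le_trans _ hA) // integral_ge0 // => x /=.
  rewrite in_itv /= lee_fin => /andP[mx _].
  by rewrite mulr_ge0 ?sqr_ge0 // exprn_ge0 // (le_trans (ltW m0)).
pose K := (m ^+ k)^-1 * (m^-1 - M^-1).
have K0 : 0 < K by rewrite mulr_gt0 ?invr_gt0 ?exprn_gt0 // subr_gt0 ltf_pV2.
have : `|\int[mu]_(x in `[m, M]) g x| ^+ 2 <= A * K.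
  apply: sqr_le_of_amgm => // e e0.
  have mgE : measurable_fun `[m, M] (EFin \o g) by exact/measurable_EFinP.
  have hI : (`|\int[mu]_(x in `[m, M]) (g x)%:E| <=
             (e / 2 * A + (2 * e)^-1 * (m ^+ k)^-1 * (m^-1 - M^-1))%:E)%E.
    apply: (le_trans (le_abse_integral mu (measurable_itv _) mgE)).
    apply: (le_trans (integral_normr_le_weighted k m0 mM e0 mg)).
    rewrite EFinD (EFinM (e / 2)) leeD2r //; apply: lee_wpmul2l => //.
    by rewrite lee_fin divr_ge0 // ltW.
  rewrite /Rintegral /K mulrA; move: hI.
  by case: (\int[mu]_(x in `[m, M]) (g x)%:E)%E.
rewrite real_normK ?num_real // => hD.
have hK : m ^+ k.+1 * K = 1 - m / M.
  by rewrite /K exprSr; field; rewrite !gt_eqF ?exprn_gt0.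
apply: (le_trans (ler_wpM2l (exprn_ge0 _ (ltW m0)) hD)).
rewrite mulrCA hK; have : 0 <= m / M by rewrite divr_ge0 // ltW.
nra.
Qed.

Lemma exists_mul_le_integral (h : R -> R) (c d Q : R) : c < d ->
  (forall x, x \in `[c, d] -> 0 <= h x) -> measurable_fun `[c, d] h ->
  (\int[mu]_(x in `[c, d]) (h x)%:E < Q%:E)%E ->
  exists2 t, t \in `[c, d] & (d - c) * h t <= Q.
Proof.
move=> cd h0 mh hQ.
have [//|no_t] := pselect (exists2 t, t \in `[c, d] & (d - c) * h t <= Q).
have dc0 : 0 < d - c by rewrite subr_gt0.
have Q0 : 0 <= Q.
  by rewrite -lee_fin (le_trans _ (ltW hQ)) // integral_ge0 // => x /h0; rewrite lee_fin.
suff : (Q%:E <= \int[mu]_(x in `[c, d]) (h x)%:E)%E by rewrite leNgt hQ.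
have -> : Q%:E = (\int[mu]_(x in `[c, d]) (cst (Q / (d - c))%:E) x)%E.
  by rewrite integral_cst //= lebesgue_measure_itv /= lte_fin cd -EFinD -EFinM divfK ?gt_eqF.
apply: ge0_le_integral => //.
- by move=> x _; rewrite lee_fin divr_ge0 // ltW.
- exact/measurable_EFinP.
- move=> x xcd; rewrite lee_fin ler_pdivrMr // leNgt; apply/negP => hx.
  by apply: no_t; exists x => //; rewrite mulrC ltW.
Qed.

End integrals.

Section weighted_H1.
Variables (R : realType) (k : nat) (a b : R) (ba bb : bool) (V V' : R -> R).
Local Notation mu := (@lebesgue_measure R).
Local Notation i := (Interval (BSide ba a) (BSide bb b)).
Local Notation IA := (\int[mu]_(x in [set` i]) (x ^+ k.+2 * V' x ^+ 2)).
Local Notation IB := (\int[mu]_(x in [set` i]) (x ^+ k.+2 * V x ^+ 2)).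
Hypotheses (ab : a < b) (i_gt0 : [set` i] `<=` `]0, +oo[).
Hypotheses (mV : measurable_fun [set` i] V)
  (V_sqr_int : mu.-integrable [set` i] (fun x => (V x ^+ 2)%:E)).
Hypotheses (mV' : measurable_fun [set` i] V')
  (V'_sqr_int : mu.-integrable [set` i] (fun x => (V' x ^+ 2)%:E)).
Hypothesis V_FTC : forall x y, [set` i] x -> [set` i] y -> x <= y ->
  V y - V x = \int[mu]_(t in `[x, y]) V' t.

Lemma mem_itv_gt0 x : x \in i -> 0 < x.
Proof. by move/i_gt0; rewrite /= in_itv /= andbT. Qed.

Lemma weighted_sqr_ge0 (g : R -> R) x : x \in i -> 0 <= x ^+ k.+2 * g x ^+ 2.
Proof. by move/mem_itv_gt0/ltW => x0; rewrite mulr_ge0 ?sqr_ge0 ?exprn_ge0. Qed.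

Lemma weighted_sqr_integralE (g : R -> R) : measurable_fun [set` i] g ->
  mu.-integrable [set` i] (fun x => (g x ^+ 2)%:E) ->
  (\int[mu]_(x in [set` i]) (x ^+ k.+2 * g x ^+ 2)%:E =
   (\int[mu]_(x in [set` i]) (x ^+ k.+2 * g x ^+ 2))%:E)%E.
Proof.
move=> mg ig; have mi : measurable [set` i] := measurable_itv i.
rewrite fineK //; apply: integrable_fin_num => //.
apply: (le_integrable _ _ _ (integrableZl _ (b ^+ k.+2) ig)) => //.
  by apply/measurable_EFinP; exact: measurable_weighted_sqr.
move=> x xi; have x0 := ltW (mem_itv_gt0 xi); have xb := itv_le_right xi.
have b0 := le_trans x0 xb.
rewrite -EFinM lee_fin (ger0_norm (weighted_sqr_ge0 g xi)) ger0_norm.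
  by rewrite ler_wpM2r ?sqr_ge0 // lerXn2r.
by rewrite mulr_ge0 ?sqr_ge0 // exprn_ge0.
Qed.

Lemma increment_sqr_le_ordered s t : s \in i -> t \in i -> s <= t ->
  s ^+ k.+1 * (V t - V s) ^+ 2 <= IA.
Proof.
move=> si ti; rewrite le_eqVlt => /predU1P[-> | st].
  by rewrite subrr expr0n /= mulr0 Rintegral_ge0 // => x; exact: weighted_sqr_ge0.
have sti := subset_itvcc si ti.
rewrite V_FTC ?(ltW st) //; apply: sqr_Rintegral_le_weighted (mem_itv_gt0 si) st _ _.
  exact: measurable_funS (measurable_itv i) sti mV'.
rewrite -weighted_sqr_integralE //; apply: ge0_subset_integral => //.
- by apply/measurable_EFinP; exact: measurable_weighted_sqr.
- by move=> x xi; rewrite lee_fin weighted_sqr_ge0.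
Qed.

Lemma increment_sqr_le s t : s \in i -> t \in i -> s <= 2 * t ->
  s ^+ k.+1 * (V s - V t) ^+ 2 <= 2 ^+ k.+1 * IA.
Proof.
move=> si ti s2t; have IA0 : 0 <= IA by rewrite Rintegral_ge0 // => x; exact: weighted_sqr_ge0.
have [st | ts] := leP s t.
  rewrite -opprB sqrrN (le_trans (increment_sqr_le_ordered si ti st)) //.
  by rewrite ler_peMl // exprn_ege1 // ler1n.
have := increment_sqr_le_ordered ti si (ltW ts).
move/(ler_wpM2l (exprn_ge0 k.+1 (ler0n _ 2))); apply: le_trans.
rewrite [X in _ <= X]mulrA ler_wpM2r ?sqr_ge0 // exprn_le_double //.
exact/ltW/mem_itv_gt0.
Qed.

Lemma exists_right_point_weighted_le (Q : R) : IB < Q ->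
  exists t, [/\ t \in i, b <= 2 * t & (b - a) ^+ 2 * (t ^+ k.+1 * V t ^+ 2) <= 8 * Q].
Proof.
move=> IBQ; have a0 := itv_left_ge0 ab i_gt0.
pose c := (a + b) / 2; have [ac cb] := midf_lt ab.
pose d := (c + b) / 2; have [cd db] := midf_lt cb.
have ci : c \in i := in_itv_oo ba bb ac cb.
have di : d \in i := in_itv_oo ba bb (lt_trans ac cd) db.
have cdi := subset_itvcc ci di.
have [t tcd ht] : exists2 t, t \in `[c, d] & (d - c) * (t ^+ k.+2 * V t ^+ 2) <= Q.
  apply: exists_mul_le_integral cd _ _ _.
  - by move=> x /cdi; exact: weighted_sqr_ge0.
  - by apply: measurable_weighted_sqr; exact: measurable_funS (measurable_itv i) cdi mV.
  apply: (@le_lt_trans _ _ IB%:E); last by rewrite lte_fin.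
  rewrite -weighted_sqr_integralE //; apply: ge0_subset_integral => //.
  - by apply/measurable_EFinP; exact: measurable_weighted_sqr.
  - by move=> x xi; rewrite lee_fin weighted_sqr_ge0.
have ti : t \in i := cdi _ tcd.
move: tcd; rewrite in_itv /= => /andP[ct td].
exists t; split => //; first by rewrite /c in ct; lra.
have X0 : 0 <= t ^+ k.+1 * V t ^+ 2.
  by rewrite mulr_ge0 ?sqr_ge0 // exprn_ge0 // ltW // mem_itv_gt0.
have L0 : 0 <= b - a by rewrite subr_ge0 ltW.
have tL : 0 <= t - (b - a) / 2 by rewrite /c in ct; lra.
have dc : d - c = (b - a) / 4 by rewrite /d /c; field.
move: ht; rewrite exprS -mulrA dc; move: (t ^+ k.+1 * V t ^+ 2) X0 => X X0 ht.
have := mulr_ge0 (mulr_ge0 X0 L0) tL.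
nra.
Qed.

Lemma weighted_H1_pointwise s : s \in i ->
  Num.sqrt (s ^+ k.+1) * `|V s| <=
  2 ^+ k.+2 * (Num.sqrt IA + (b - a)^-1 * Num.sqrt IB).
Proof.
move=> si; have s0 := ltW (mem_itv_gt0 si); have sk0 := exprn_ge0 k.+1 s0.
have L0 : 0 < b - a by rewrite subr_gt0.
set C : R := 2 ^+ k.+2; have C0 : 0 <= C := exprn_ge0 _ (ler0n _ 2).
have P0 : 0 <= 2 ^+ k.+1 :> R := exprn_ge0 _ (ler0n _ 2).
have P8 : 2 ^+ k.+1 * 8 <= C ^+ 2.
  have -> : 8 = 2 ^+ 3 :> R by rewrite -natrX.
  by rewrite -exprD -exprM; apply: ler_weXn2l; [rewrite ler1n | lia].
have IA0 : 0 <= IA by apply: Rintegral_ge0 => x; exact: weighted_sqr_ge0.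
have IB0 : 0 <= IB by apply: Rintegral_ge0 => x; exact: weighted_sqr_ge0.
rewrite mulrDr mulrA; apply: ler_addsqrt_gt0P => [||q q0] //.
  by rewrite divr_ge0 // ltW.
have IBq : IB < IB + q by rewrite ltrDl.
have [t [ti bt ht]] := exists_right_point_weighted_le IBq.
have st : s <= 2 * t := le_trans (itv_le_right si) bt.
have tri : `|V s| <= `|V t| + `|V s - V t|.
  by have := ler_normD (V s - V t) (V t); rewrite subrK addrC.
rewrite addrC; apply: (le_trans (ler_wpM2l (sqrtr_ge0 _) tri)); rewrite mulrDr.
apply: lerD; apply: sqrtr_mul_norm_le => //.
- by rewrite divr_ge0 // ltW.
- by rewrite addr_ge0 // ltW.
- have := ler_wpM2r (sqr_ge0 (V t)) (exprn_le_double k.+1 s0 st).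
  rewrite -mulrA => /le_trans; apply.
  rewrite expr_div_n mulrAC ler_pdivlMr ?exprn_gt0 //.
  have Q0 : 0 <= IB + q by rewrite addr_ge0 // ltW.
  rewrite -subr_ge0 in ht; rewrite -subr_ge0 in P8.
  have := mulr_ge0 P0 ht; have := mulr_ge0 Q0 P8.
  nra.
- apply: (le_trans (increment_sqr_le si ti st)); apply: ler_wpM2r => //.
  by apply: le_trans P8; rewrite ler_peMr // ler1n.
Qed.

End weighted_H1.

Lemma powR_half_sub1 (R : realType) (x : R) (n : nat) : 0 <= x ->
  x `^ (n.+2%:R / 2 - 1) = Num.sqrt (x ^+ n).
Proof.
move=> x0; have -> : n.+2%:R / 2 - 1 = n%:R * 2^-1 :> R.
  by rewrite -addn2 natrD; field.
by rewrite powRrM powR_mulrn // powR12_sqrt // exprn_ge0.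
Qed.

Theorem lemma3p6 (R : realType) (n : nat) (hn : (3 <= n)%N) :
  exists C : R,
  forall (a b : R) (ba bb : bool) (V V' : R -> R),
    a < b ->
    [set` Interval (BSide ba a) (BSide bb b)] `<=` `]0, +oo[ ->
    H1_on [set` Interval (BSide ba a) (BSide bb b)] V V' ->
    forall s : R, s \in Interval (BSide ba a) (BSide bb b) ->
      s `^ (n%:R / 2 - 1) * `|V s| <=
      C * (Num.sqrt (\int[lebesgue_measure]_(t in [set` Interval (BSide ba a) (BSide bb b)])
                       (t ^+ (n - 1) * V' t ^+ 2))
           + (b - a)^-1 *
             Num.sqrt (\int[lebesgue_measure]_(t in [set` Interval (BSide ba a) (BSide bb b)])
                       (t ^+ (n - 1) * V t ^+ 2))).
Proof.
have [k ->] : exists k, n = k.+3 by exists (n - 3)%N; lia.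
exists (2 ^+ k.+2) => a b ba bb V V' ab i_gt0 [mV V_sqr_int mV' V'_sqr_int V_FTC] s si.
rewrite powR_half_sub1; last exact/ltW/(mem_itv_gt0 i_gt0).
exact: weighted_H1_pointwise.
Qed.
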